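(* Consider the gamblet setting and the multigrid iteration $\operatorname{MG}$ described in the context, and assume the approximation and condition-number estimates (i)–(ii) of the context hold with constants $C>0$, $H\in(0,1)$. Take $p=1$ and $m_1=m_2=m/2$. Then for every $\theta\in(0,1)$ there exists $m$, independent of the level $k$, such that for every $k\in\{1,\dots,q\}$, every $g\in\mathbb R^{\mathcal I^{(k)}}$ and every initial guess $z_0\in\mathbb R^{\mathcal I^{(k)}}$, the solution $z$ of $A^{(k)}z=g$ satisfies $$\|z-\operatorname{MG}(k,z_0,g)\|_{A^{(k)}}\le\theta\,\|z-z_0\|_{A^{(k)}},$$ where $\|x\|_{A^{(k)}}^2:=x^TA^{(k)}x$.
   Context: Let $V\subset V_0\subset V^*$ be real Hilbert spaces forming a Gelfand triple: $V^*$ is the dual of $V$, the duality pairing $[\cdot,\cdot]$ between $V^*$ and $V$ extends the inner product $\langle\cdot,\cdot\rangle_0$ of $V_0$ (norm $\|\cdot\|_0$), and the embedding $V_0\to V^*$ is compact and dense. Let $\mathcal L:V\to V^*$ be a symmetric positive linear bijection; $\langle u,w\rangle:=[\mathcal Lu,w]$ is the energy inner product on $V$, with norm $\|u\|^2=\langle u,u\rangle$. Gamblets: let $\mathcal I^{(1)},\dots,\mathcal I^{(q)}$ be finite index sets and, for each $k$, let $(\phi_i^{(k)})_{i\in\mathcal I^{(k)}}$ be linearly independent elements of $V_0$ with uniformly well-conditioned mass matrices, $C^{-1}|x|^2\le\|\sum_ix_i\phi_i^{(k)}\|_0^2\le C|x|^2$ for all $x$ and $k$, nested via $\phi_i^{(k)}=\sum_{j\in\mathcal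 I^{(k+1)}}\pi^{(k,k+1)}_{ij}\phi_j^{(k+1)}$ where $\pi^{(k,k+1)}$ has full rank $|\mathcal I^{(k)}|$ and $\pi^{(k,k+1)}\pi^{(k+1,k)}=I$, $\pi^{(k+1,k)}:=(\pi^{(k,k+1)})^T$. Let $\Theta^{(k)}_{ij}:=[\phi_i^{(k)},\mathcal L^{-1}\phi_j^{(k)}]$, $A^{(k)}:=(\Theta^{(k)})^{-1}$, $\psi_i^{(k)}:=\sum_jA^{(k)}_{ij}\mathcal L^{-1}\phi_j^{(k)}$, $\mathfrak V^{(k)}:=\operatorname{span}\{\psi_i^{(k)}\}$; then $A^{(k)}_{ij}=\langle\psi_i^{(k)},\psi_j^{(k)}\rangle$ and $u^{(k)}:=\sum_i[\phi_i^{(k)},u]\psi_i^{(k)}$ is the $\langle\cdot,\cdot\rangle$-orthogonal projection of $u\in V$ onto $\mathfrak V^{(k)}$. Interpolation matrices: $R^{(k-1,k)}:=A^{(k-1)}\pi^{(k-1,k)}\Theta^{(k)}$ (so $\psi_i^{(k-1)}=\sum_jR^{(k-1,k)}_{ij}\psi_j^{(k)}$), $R^{(k,k-1)}:=(R^{(k-1,k)})^T$. For $k\ge2$ let $W^{(k)}$ be a $\mathcal J^{(k)}\times\mathcal I^{(k)}$ matrix with $|\mathcal J^{(k)}|=|\mathcal I^{(k)}|-|\mathcal I^{(k-1)}|$, $\operatorname{Ker}(\pi^{(k-1,k)})=\operatorname{Im}(W^{(k),T})$, $W^{(k)}W^{(k),T}=I$, and $B^{(k)}:=W^{(k)}A^{(k)}W^{(k),T}$;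 $B^{(1)}:=A^{(1)}$. Assumed estimates (for constants $C>0$, $H\in(0,1)$, all $k$): (i) $\|u-u^{(k)}\|_0\le CH^k\|u-u^{(k)}\|$ for $u\in V$, and $\|u-u^{(k)}\|\le CH^k\|\mathcal Lu\|_0$ whenever $\mathcal Lu\in V_0$; (ii) $C^{-1}H^{-2(k-1)}I\le B^{(k)}\le CH^{-2k}I$, $\operatorname{Cond}(B^{(k)})\le CH^{-2}$, and $C^{-1}I\le A^{(k)}\le CH^{-2k}I$. Multigrid iteration $\operatorname{MG}(k,z_0,g)$ for $A^{(k)}z=g$ (nonnegative integers $m_1,m_2$, $p\in\{1,2\}$, $\Lambda^{(k)}:=CH^{-2k}$): for $k=1$ it is the exact solution of $A^{(1)}x=g$. For $k>1$: (1) presmoothing $z_\ell=z_{\ell-1}+\frac1{\Lambda^{(k)}}(g-A^{(k)}z_{\ell-1})$, $1\le\ell\le m_1$; (2) correction: $g^{(k-1)}:=R^{(k-1,k)}(g-A^{(k)}z_{m_1})$, $q_0:=0$, $q_i:=\operatorname{MG}(k-1,q_{i-1},g^{(k-1)})$ for $1\le i\le p$, and $z_{m_1+1}:=z_{m_1}+R^{(k,k-1)}q_p$; (3) postsmoothing $z_\ell=z_{\ell-1}+\frac1{\Lambda^{(k)}}(g-A^{(k)}z_{\ell-1})$ for $m_1+2\le\ell\le m_1+m_2+1$; output $\operatorname{MG}(k,z_0,g):=z_{m_1+m_2+1}$. *)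

From HB Require Import structures.
From mathcomp Require Import all_boot all_order all_algebra.
From mathcomp Require Import boolp classical_sets reals.
Unset Implicit Arguments. Unset Strict Implicit. Unset Printing Implicit Defensive.
Import Order.TTheory GRing.Theory Num.Theory.
Local Open Scope ring_scope.
Local Open Scope classical_set_scope.

Section Gamblets.
Variable R : realType.

Definition sqnorm (m : nat) (x : 'cV[R]_m) : R := \sum_i x i 0 ^+ 2.

Definition qform (m : nat) (M : 'M[R]_m) (x : 'cV[R]_m) : R := (x^T *m M *m x) 0 0.

Definition Anorm (m : nat) (M : 'M[R]_m) (x : 'cV[R]_m) : R := Num.sqrt (qform m M x).

Definition loewner_ge (m : nat) (M : 'M[R]_m) (a : R) := forall x : 'cV[R]_m, a * sqnorm m x <= qform m M x.
Definition loewner_le (m : nat) (M : 'M[R]_m) (b : R) := forall x : 'cV[R]_m, qform m M x <= b * sqnorm m x.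

Definition lambda_max (m : nat) (M : 'M[R]_m) : R :=
  sup [set qform m M x | x in [set x : 'cV[R]_m | sqnorm m x = 1]].
Definition lambda_min (m : nat) (M : 'M[R]_m) : R :=
  inf [set qform m M x | x in [set x : 'cV[R]_m | sqnorm m x = 1]].
Definition Cond (m : nat) (M : 'M[R]_m) : R := lambda_max m M / lambda_min m M.

(** Gelfand-triple data:  iV : V -> V0,  i0 : V0 -> V*,  inner product ip0 on V0,
    duality pairing dual : V* -> V -> R,  Linv = L^{-1} : V* -> V. *)
Variables (V V0 Vs : lmodType R).
Variables (iV : V -> V0) (i0 : V0 -> Vs).
Variable ip0 : V0 -> V0 -> R.
Variable dual : Vs -> V -> R.
Variables (L : V -> Vs) (Linv : Vs -> V).

Definition norm0 (x : V0) : R := Num.sqrt (ip0 x x).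
Definition eip (u w : V) : R := dual (L u) w.
Definition enorm (u : V) : R := Num.sqrt (eip u u).

(** Gamblet data: n k = |I^(k)|, phi k i = phi_i^(k). *)
Variable n : nat -> nat.
Variable phi : forall k, 'I_(n k) -> V0.

Definition Theta (k : nat) : 'M[R]_(n k) :=
  \matrix_(i, j) dual (i0 (phi k i)) (Linv (i0 (phi k j))).
Definition Amat (k : nat) : 'M[R]_(n k) := invmx (Theta k).
Definition psi (k : nat) (i : 'I_(n k)) : V :=
  \sum_j Amat k i j *: Linv (i0 (phi k j)).
Definition uproj (k : nat) (u : V) : V :=
  \sum_i dual (i0 (phi k i)) u *: psi k i.

(** pi k : the matrix pi^(k-1,k), of size |I^(k-1)| x |I^(k)|. *)
Variable pi : forall k, 'M[R]_(n k.-1, n k).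
Definition Rmat (k : nat) : 'M[R]_(n k.-1, n k) := Amat k.-1 *m pi k *m Theta k.

Variable W : forall k, 'M[R]_(n k - n k.-1, n k).
Definition Bmat (k : nat) : 'M[R]_(n k - n k.-1) := W k *m Amat k *m (W k)^T.

End Gamblets.

Section Multigrid.
Variable R : realType.
Variable n : nat -> nat.
Variable A : forall k, 'M[R]_(n k).
Variable Rm : forall k, 'M[R]_(n k.-1, n k).
Variable Lam : nat -> R.
Variables (m1 m2 p : nat).

Definition smooth (k : nat) (j : nat) (g z : 'cV[R]_(n k)) : 'cV[R]_(n k) :=
  iter j (fun z => z + (Lam k)^-1 *: (g - A k *m z)) z.

(** MG(k, z0, g); level 0 is never reached from k >= 1 and is a dummy. *)
Fixpoint MG (k : nat) : 'cV[R]_(n k) -> 'cV[R]_(n k) -> 'cV[R]_(n k) :=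
  match k with
  | 0 => fun z0 _ => z0
  | k'.+1 => fun z0 g =>
      if k' == 0%N then invmx (A k'.+1) *m g
      else
        let z1 := smooth k'.+1 m1 g z0 in
        let g' := Rm k'.+1 *m (g - A k'.+1 *m z1) in
        let qp := iter p (fun q => MG k' q g') 0 in
        let z2 := z1 + (Rm k'.+1)^T *m qp in
        smooth k'.+1 m2 g z2
  end.

End Multigrid.

(* Let v be the error after the m presmoothing steps with Lambda_k = C H^(-2k), an upper
   bound for A^(k).  The coarse correction splits v = r + R^T c A-orthogonally; the
   recursive call reduces the coarse part by theta, while r is A-orthogonal to the coarse
   space, hence lies in Im W^T, where A >= lambda_k = C^(-1) H^(-2(k-1)) by the lower bound
   on B^(k); this gives lambda_k |r|_A^2 <= |A v|^2.  Presmoothing lowers |.|_A^2 by at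
   least m |A v|^2 / Lambda_k, so the fine part costs at most Lambda_k / (m lambda_k)
   = C^2 H^(-2) / m times that decrease, which is <= theta^2 once m >= C^2 H^(-2) / theta^2,
   a bound independent of k.  Postsmoothing does not increase the energy norm. *)

From HB Require Import structures.
From mathcomp Require Import all_boot all_order all_algebra.
From mathcomp Require Import boolp classical_sets reals.
From mathcomp Require Import ring lra.
Import Order.TTheory GRing.Theory Num.Theory.
Local Open Scope ring_scope.
Set Implicit Arguments.
Unset Strict Implicit.
Unset Printing Implicit Defensive.

Section EuclideanForm.
Variable R : realType.

Definition dot N (x y : 'cV[R]_N) : R := (x^T *m y) 0 0.

Lemma dotE N (x y : 'cV[R]_N) : dot x y = \sum_i x i 0 * y i 0.
Proof. by rewrite /dot mxE; apply: eq_bigr => i _; rewrite mxE. Qed.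

Lemma dotC N (x y : 'cV[R]_N) : dot x y = dot y x.
Proof. by rewrite !dotE; apply: eq_bigr => i _; rewrite mulrC. Qed.

Lemma dotDr N (x y z : 'cV[R]_N) : dot x (y + z) = dot x y + dot x z.
Proof. by rewrite /dot mulmxDr mxE. Qed.

Lemma dotZr N a (x y : 'cV[R]_N) : dot x (a *: y) = a * dot x y.
Proof. by rewrite /dot -scalemxAr mxE. Qed.

Lemma dotNr N (x y : 'cV[R]_N) : dot x (- y) = - dot x y.
Proof. by rewrite -scaleN1r dotZr mulN1r. Qed.

Lemma dotBr N (x y z : 'cV[R]_N) : dot x (y - z) = dot x y - dot x z.
Proof. by rewrite dotDr dotNr. Qed.

Lemma dotDl N (x y z : 'cV[R]_N) : dot (x + y) z = dot x z + dot y z.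
Proof. by rewrite dotC dotDr !(dotC z). Qed.

Lemma dotZl N a (x y : 'cV[R]_N) : dot (a *: x) y = a * dot x y.
Proof. by rewrite dotC dotZr dotC. Qed.

Lemma dotBl N (x y z : 'cV[R]_N) : dot (x - y) z = dot x z - dot y z.
Proof. by rewrite dotC dotBr !(dotC z). Qed.

Lemma dot0r N (x : 'cV[R]_N) : dot x 0 = 0.
Proof. by rewrite /dot mulmx0 mxE. Qed.

Lemma dot_mulmxr M N (x : 'cV[R]_M) (A : 'M[R]_(M, N)) (y : 'cV[R]_N) :
  dot x (A *m y) = dot (A^T *m x) y.
Proof. by rewrite /dot trmx_mul trmxK mulmxA. Qed.

Lemma dot_trmxl M N (x : 'cV[R]_M) (A : 'M[R]_(M, N)) (y : 'cV[R]_N) :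
  dot (A^T *m x) y = dot x (A *m y).
Proof. by rewrite dot_mulmxr. Qed.

Lemma sqnormE N (x : 'cV[R]_N) : sqnorm R N x = dot x x.
Proof. by rewrite dotE; apply: eq_bigr => i _; rewrite expr2. Qed.

Lemma qformE N (A : 'M[R]_N) x : qform R N A x = dot x (A *m x).
Proof. by rewrite /qform /dot mulmxA. Qed.

Lemma sqnorm_ge0 N (x : 'cV[R]_N) : 0 <= sqnorm R N x.
Proof. by apply: sumr_ge0 => i _; rewrite sqr_ge0. Qed.

Lemma sqnorm_gt0 N (x : 'cV[R]_N) : x != 0 -> 0 < sqnorm R N x.
Proof.
move=> x_neq0; rewrite lt_def sqnorm_ge0 andbT; apply: contra x_neq0 => /eqP.
move/psumr_eq0P => x2_eq0; apply/eqP/matrixP => i j; rewrite (ord1 j) mxE.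
by apply/eqP; rewrite -sqrf_eq0; apply/eqP/x2_eq0 => // k _; rewrite sqr_ge0.
Qed.

Lemma loewner_ge_qform_ge0 N (M : 'M[R]_N) (c : R) :
  0 <= c -> loewner_ge R N M c -> forall x, 0 <= qform R N M x.
Proof. by move=> c_ge0 M_ge x; rewrite (le_trans _ (M_ge x)) // mulr_ge0 ?sqnorm_ge0. Qed.

Lemma qform_coercive_unitmx N (M : 'M[R]_N) (c : R) : 0 < c ->
  (forall x, c * sqnorm R N x <= qform R N M x) -> M \in unitmx.
Proof.
move=> c_gt0 M_ge; rewrite unitmxE unitfE -det_tr.
apply/negP => /det0P [v v_neq0 vM0].
have Mv0 : M *m v^T = 0 by rewrite -[M]trmxK -trmx_mul vM0 trmx0.
have := M_ge v^T; rewrite qformE Mv0 dot0r leNgt => /negP; apply.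
by rewrite mulr_gt0 // sqnorm_gt0 // trmx_eq0.
Qed.
End EuclideanForm.

Section TwoLevel.
Variable R : realType.
Variables (N Nc : nat) (A : 'M[R]_N) (Ac : 'M[R]_Nc) (Rr : 'M[R]_(Nc, N)).
Variables (lam Lam th : R) (m : nat).
Hypothesis A_sym : A^T = A.
Hypothesis A_ge0 : forall x, 0 <= qform R N A x.
Hypothesis A_le : forall x, qform R N A x <= Lam * sqnorm R N x.
Hypothesis Lam_gt0 : 0 < Lam.

Lemma dot_symmx (x y : 'cV[R]_N) : dot x (A *m y) = dot (A *m x) y.
Proof. by rewrite dot_mulmxr A_sym. Qed.

Lemma sqnorm_mulmx_le y : sqnorm R N (A *m y) <= Lam * qform R N A y.
Proof.
have := A_ge0 (Lam *: y - A *m y); have := A_le (A *m y).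
rewrite !qformE sqnormE mulmxBr -scalemxAr !(dotBl, dotBr, dotZl, dotZr).
rewrite (dot_symmx y (A *m y)) => AAy_le ge0.
suff : Lam * dot (A *m y) (A *m y) <= Lam * (Lam * dot y (A *m y)).
  by rewrite ler_pM2l.
lra.
Qed.

Definition richardson_error (w : 'cV[R]_N) := w - Lam^-1 *: (A *m w).

Definition richardson (g : 'cV[R]_N) j z :=
  iter j (fun z => z + Lam^-1 *: (g - A *m z)) z.

Lemma richardson_errorE g zz j z : g = A *m zz ->
  zz - richardson g j z = iter j richardson_error (zz - z).
Proof.
move=> g_def; elim: j => [//|j IH].
rewrite /richardson !iterS -/(richardson g j z) -IH g_def.
by rewrite /richardson_error -mulmxBr opprD addrA.
Qed.

Lemma qform_richardson_error_le w :
  qform R N A (richardson_error w) <= qform R N A w - Lam^-1 * sqnorm R N (A *m w).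
Proof.
have := A_le (A *m w); rewrite /richardson_error !qformE sqnormE.
rewrite mulmxBr -scalemxAr !(dotBl, dotBr, dotZl, dotZr) -!dot_symmx.
set t := Lam^-1; have t_gt0 : 0 < t by rewrite invr_gt0.
have tLam u : t * t * (Lam * u) = t * u by rewrite mulrACA mulVf ?mul1r // lt0r_neq0.
move=> /(ler_wpM2l (ltW (mulr_gt0 t_gt0 t_gt0))); rewrite tLam; lra.
Qed.

Lemma sqnorm_richardson_error_le w :
  sqnorm R N (A *m richardson_error w) <= sqnorm R N (A *m w).
Proof.
have := sqnorm_mulmx_le (A *m w); have := A_ge0 (A *m w).
rewrite /richardson_error !qformE !sqnormE mulmxBr -scalemxAr.
rewrite !(dotBl, dotBr, dotZl, dotZr) (dotC (A *m (A *m w))).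
set t := Lam^-1; have t_gt0 : 0 < t by rewrite invr_gt0.
have tLam u : t * t * (Lam * u) = t * u by rewrite mulrACA mulVf ?mul1r // lt0r_neq0.
move=> qAw_ge0 /(ler_wpM2l (ltW (mulr_gt0 t_gt0 t_gt0))); rewrite tLam.
have : 0 <= t * dot (A *m w) (A *m (A *m w)) by rewrite mulr_ge0 // ltW.
lra.
Qed.

Lemma smoothing_property j e :
  j%:R * (Lam^-1 * sqnorm R N (A *m iter j richardson_error e))
  <= qform R N A e - qform R N A (iter j richardson_error e).
Proof.
elim: j => [|j IH]; first by rewrite mul0r subrr.
rewrite iterS -[j.+1]addn1 natrD mulrDl mul1r.
set v := iter j richardson_error e in IH *.
have t_ge0 : 0 <= Lam^-1 by rewrite invr_ge0 ltW.
have res_le := ler_wpM2l t_ge0 (sqnorm_richardson_error_le v).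
have := qform_richardson_error_le v; have := ler_wpM2l (ler0n _ j) res_le.
lra.
Qed.

Lemma qform_iter_richardson_error_le j e :
  qform R N A (iter j richardson_error e) <= qform R N A e.
Proof.
have := smoothing_property j e.
have : 0 <= j%:R * (Lam^-1 * sqnorm R N (A *m iter j richardson_error e)).
  by rewrite mulr_ge0 ?mulr_ge0 ?sqnorm_ge0 // invr_ge0 ltW.
lra.
Qed.

Hypothesis Ac_unit : Ac \in unitmx.
Hypothesis galerkin : Rr *m A *m Rr^T = Ac.
Hypothesis lam_ge0 : 0 <= lam.
Hypothesis complement_ge :
  forall x, Rr *m (A *m x) = 0 -> lam * sqnorm R N x <= qform R N A x.

Lemma coarse_residual_orth (v : 'cV[R]_N) :
  Rr *m (A *m (v - Rr^T *m (invmx Ac *m (Rr *m (A *m v))))) = 0.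
Proof. by rewrite !mulmxBr !mulmxA galerkin mulmxV // mul1mx subrr. Qed.

Section AOrthogonalResidual.
Variable r : 'cV[R]_N.
Hypothesis r_orth : Rr *m (A *m r) = 0.

Lemma dot_coarse_residual y : dot (Rr^T *m y) (A *m r) = 0.
Proof. by rewrite -dot_mulmxr r_orth dot0r. Qed.

Lemma dot_residual_coarse y : dot r (A *m (Rr^T *m y)) = 0.
Proof. by rewrite dot_symmx dotC dot_coarse_residual. Qed.

Lemma qform_add_coarse y :
  qform R N A (r + Rr^T *m y) = qform R N A r + qform R Nc Ac y.
Proof.
rewrite !qformE mulmxDr !(dotDl, dotDr) dot_residual_coarse dot_coarse_residual.
by rewrite dot_trmxl !mulmxA galerkin addr0 add0r.
Qed.

Lemma approximation_property y :
  lam * qform R N A r <= sqnorm R N (A *m (r + Rr^T *m y)).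
Proof.
set v := r + Rr^T *m y.
have qr_dot : qform R N A r = dot r (A *m v).
  by rewrite qformE mulmxDr dotDr dot_residual_coarse addr0.
have := sqnorm_ge0 (lam *: r - A *m v).
have := ler_wpM2l lam_ge0 (complement_ge r_orth).
rewrite !sqnormE !(dotBl, dotBr, dotZl, dotZr) (dotC (A *m v) r) -qr_dot.
lra.
Qed.
End AOrthogonalResidual.

Hypothesis smoothing_enough : Lam <= m%:R * th ^+ 2 * lam.

Lemma coarse_correction_le v qp :
  qform R Nc Ac (invmx Ac *m (Rr *m (A *m v)) - qp)
    <= th ^+ 2 * qform R Nc Ac (invmx Ac *m (Rr *m (A *m v))) ->
  Lam * qform R N A (v - Rr^T *m qp)
    <= th ^+ 2 * (Lam * qform R N A v + m%:R * sqnorm R N (A *m v)).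
Proof.
set c := invmx Ac *m _ => coarse_le.
have r_orth := coarse_residual_orth v; set r := v - Rr^T *m c in r_orth.
have v_split : v = r + Rr^T *m c by rewrite subrK.
have -> : v - Rr^T *m qp = r + Rr^T *m (c - qp).
  by rewrite {1}v_split mulmxBr addrA.
have qv_split : qform R N A v = qform R N A r + qform R Nc Ac c.
  by rewrite {1}v_split qform_add_coarse.
rewrite qv_split qform_add_coarse //.
have resid_le := approximation_property r_orth c; rewrite -v_split in resid_le.
have := ler_wpM2l (mulr_ge0 (ler0n _ m) (sqr_ge0 th)) resid_le.
have := ler_wpM2r (A_ge0 r) smoothing_enough.
have := ler_wpM2l (ltW Lam_gt0) coarse_le.
have := mulr_ge0 (mulr_ge0 (sqr_ge0 th) (ltW Lam_gt0)) (A_ge0 r).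
lra.
Qed.

Lemma twogrid_contraction (Q : 'cV[R]_Nc -> 'cV[R]_Nc) g z0 :
  A \in unitmx ->
  (forall g', qform R Nc Ac (invmx Ac *m g' - Q g')
              <= th ^+ 2 * qform R Nc Ac (invmx Ac *m g')) ->
  qform R N A (invmx A *m g - richardson g m
    (richardson g m z0 + Rr^T *m Q (Rr *m (g - A *m richardson g m z0))))
  <= th ^+ 2 * qform R N A (invmx A *m g - z0).
Proof.
move=> A_unit Q_contr; set z1 := richardson g m z0.
set zz := invmx A *m g; have g_def : g = A *m zz by rewrite mulKVmx.
set e := zz - z0; set v := iter m richardson_error e.
have z1_err : zz - z1 = v by apply: richardson_errorE.
have -> : g - A *m z1 = A *m v by rewrite -z1_err mulmxBr -g_def.
rewrite richardson_errorE // opprD addrA z1_err.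
apply: le_trans (qform_iter_richardson_error_le _ _) _.
rewrite -(ler_pM2l Lam_gt0); apply: le_trans (coarse_correction_le (Q_contr _)) _.
have smooth_le : m%:R * sqnorm R N (A *m v) <= Lam * (qform R N A e - qform R N A v).
  have := ler_wpM2l (ltW Lam_gt0) (smoothing_property m e).
  by rewrite mulrCA mulVKf // lt0r_neq0.
rewrite mulrCA ler_wpM2l ?sqr_ge0 //; lra.
Qed.
End TwoLevel.

Lemma MG_succ (R : realType) (n : nat -> nat) (A : forall k, 'M[R]_(n k))
    (Rm : forall k, 'M[R]_(n k.-1, n k)) (Lam : nat -> R) (m1 m2 k : nat)
    (z0 g : 'cV[R]_(n k.+1)) :
  (0 < k)%N ->
  let z1 := richardson (A k.+1) (Lam k.+1) g m1 z0 in
  MG R n A Rm Lam m1 m2 1 k.+1 z0 g =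
  richardson (A k.+1) (Lam k.+1) g m2
    (z1 + (Rm k.+1)^T *m MG R n A Rm Lam m1 m2 1 k 0 (Rm k.+1 *m (g - A k.+1 *m z1))).
Proof. by case: k z0 g. Qed.

Section VCycle.
Variable R : realType.
Variables (n : nat -> nat) (A : forall k, 'M[R]_(n k)).
Variable Rm : forall k, 'M[R]_(n k.-1, n k).
Variables (lam Lam : nat -> R) (q m : nat) (th : R).
Hypothesis A_sym : forall k, (1 <= k <= q)%N -> (A k)^T = A k.
Hypothesis A_unit : forall k, (1 <= k <= q)%N -> A k \in unitmx.
Hypothesis A_ge0 : forall k, (1 <= k <= q)%N ->
  forall x, 0 <= qform R (n k) (A k) x.
Hypothesis A_le : forall k, (1 <= k <= q)%N ->
  forall x, qform R (n k) (A k) x <= Lam k * sqnorm R (n k) x.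
Hypothesis Lam_gt0 : forall k, (1 <= k <= q)%N -> 0 < Lam k.
Hypothesis galerkin : forall k, (2 <= k <= q)%N ->
  Rm k *m A k *m (Rm k)^T = A k.-1.
Hypothesis lam_ge0 : forall k, (2 <= k <= q)%N -> 0 <= lam k.
Hypothesis complement_ge : forall k, (2 <= k <= q)%N ->
  forall x, Rm k *m (A k *m x) = 0 ->
  lam k * sqnorm R (n k) x <= qform R (n k) (A k) x.
Hypothesis smoothing_enough : forall k, (2 <= k <= q)%N ->
  Lam k <= m%:R * th ^+ 2 * lam k.

Theorem MG_contraction k : (1 <= k <= q)%N -> forall g z0 : 'cV[R]_(n k),
  qform R (n k) (A k) (invmx (A k) *m g - MG R n A Rm Lam m m 1 k z0 g)
  <= th ^+ 2 * qform R (n k) (A k) (invmx (A k) *m g - z0).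
Proof.
elim: k => [//|[_ k_range g z0|k IH k_range g z0]].
  by rewrite /= subrr qformE mulmx0 dot0r mulr_ge0 ?sqr_ge0 ?A_ge0.
have fine2 : (2 <= k.+2 <= q)%N := k_range.
have fine1 : (1 <= k.+2 <= q)%N := k_range.
have coarse : (1 <= k.+1 <= q)%N := ltnW k_range.
rewrite MG_succ //; apply: (twogrid_contraction (A_sym fine1) (A_ge0 fine1)
  (A_le fine1) (Lam_gt0 fine1) (A_unit coarse) (galerkin fine2)
  (lam_ge0 fine2) (complement_ge fine2) (smoothing_enough fine2)
  (Q := MG R n A Rm Lam m m 1 k.+1 0)).
  exact: A_unit.
by move=> g'; have := IH coarse g' 0; rewrite subr0.
Qed.
End VCycle.

Lemma level_range_weaken k q : (2 <= k <= q)%N -> (1 <= k <= q)%N.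
Proof. by case/andP => /ltnW -> ->. Qed.

Lemma level_range_pred k q : (2 <= k <= q)%N -> (1 <= k.-1 <= q)%N.
Proof. by case: k => [|[|k]] // /andP[_ /ltnW]. Qed.

Lemma linear_lincomb (R : realType) (U V : lmodType R) (f : U -> V) :
  linear f -> forall (I : finType) (c : I -> R) (x : I -> U),
  f (\sum_i c i *: x i) = \sum_i c i *: f (x i).
Proof.
move=> f_lin I c x.
pose F : {linear U -> V} := HB.pack f (GRing.isLinear.Build _ _ _ _ f f_lin).
rewrite -[f]/(F : U -> V) linear_sum; apply: eq_bigr => i _; exact: linearZ.
Qed.

Lemma scalar_lincomb (R : realType) (U : lmodType R) (h : U -> R) :
  scalar h -> forall (I : finType) (c : I -> R) (x : I -> U),
  h (\sum_i c i *: x i) = \sum_i c i * h (x i).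
Proof. exact: (@linear_lincomb R U R^o h). Qed.

Section GambletHierarchy.
Variable R : realType.
Variables (V V0 Vs : lmodType R) (i0 : V0 -> Vs) (dual : Vs -> V -> R).
Variables (L : V -> Vs) (Linv : Vs -> V) (n : nat -> nat).
Variable phi : forall k, 'I_(n k) -> V0.
Variable pi : forall k, 'M[R]_(n k.-1, n k).
Variable W : forall k, 'M[R]_(n k - n k.-1, n k).
Arguments phi : clear implicits.
Hypothesis i0_linear : linear i0.
Hypothesis dual_scalarl : forall v, scalar (dual^~ v).
Hypothesis dual_scalarr : forall f, scalar (dual f).
Hypothesis L_linear : linear L.
Hypothesis LK : cancel L Linv.
Hypothesis LinvK : cancel Linv L.
Hypothesis L_sym : forall u w, dual (L u) w = dual (L w) u.

Local Notation Theta := (Theta R V V0 Vs i0 dual Linv n phi).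
Local Notation Amat := (Amat R V V0 Vs i0 dual Linv n phi).
Local Notation Rmat := (Rmat R V V0 Vs i0 dual Linv n phi pi).
Local Notation Bmat := (Bmat R V V0 Vs i0 dual Linv n phi W).

Lemma Linv_linear : linear Linv.
Proof. by move=> a f g; rewrite -{1}(LinvK f) -{1}(LinvK g) -L_linear LK. Qed.

Lemma Theta_sym k : (Theta k)^T = Theta k.
Proof.
apply/matrixP => i j; rewrite !mxE.
by rewrite -{1}(LinvK (i0 (phi k j))) -{2}(LinvK (i0 (phi k i))) L_sym.
Qed.

Lemma Amat_sym k : (Amat k)^T = Amat k.
Proof. by rewrite /Amat trmx_inv Theta_sym. Qed.

Lemma Theta_nest k : (forall i, phi k.-1 i = \sum_j pi k i j *: phi k j) ->
  Theta k.-1 = pi k *m Theta k *m (pi k)^T.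
Proof.
move=> phi_nest; apply/matrixP => i j; rewrite !mxE !phi_nest.
rewrite !(linear_lincomb i0_linear) (linear_lincomb Linv_linear).
rewrite (scalar_lincomb (dual_scalarl _)).
under eq_bigr => a _ do rewrite (scalar_lincomb (dual_scalarr _)).
under [RHS]eq_bigr => b _ do rewrite !mxE mulr_suml.
rewrite exchange_big /=; apply: eq_bigr => a _; rewrite mulr_sumr.
by apply: eq_bigr => b _; rewrite !mxE; ring.
Qed.

Variable q : nat.
Hypothesis Amat_unit : forall k, (1 <= k <= q)%N -> Amat k \in unitmx.

Section Level.
Variable k : nat.
Hypothesis k_range : (2 <= k <= q)%N.

Lemma Rmat_Amat : Rmat k *m Amat k = Amat k.-1 *m pi k.
Proof.
rewrite /Rmat /Amat -mulmxA mulmxV ?mulmx1 // -unitmx_inv.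
exact/Amat_unit/level_range_weaken.
Qed.

Lemma Rmat_galerkin : (forall i, phi k.-1 i = \sum_j pi k i j *: phi k j) ->
  Rmat k *m Amat k *m (Rmat k)^T = Amat k.-1.
Proof.
move=> phi_nest; rewrite Rmat_Amat /Rmat !trmx_mul Amat_sym Theta_sym.
rewrite !mulmxA -(mulmxA (Amat k.-1)) -(mulmxA (Amat k.-1)) -Theta_nest //.
by rewrite /Amat mulVmx ?mul1mx // -unitmx_inv; apply/Amat_unit/level_range_pred.
Qed.

Lemma Rmat_complement_ge (lam : R) :
  (forall x : 'cV[R]_(n k), pi k *m x = 0 -> exists y, x = (W k)^T *m y) ->
  W k *m (W k)^T = 1%:M -> loewner_ge R _ (Bmat k) lam ->
  forall x, Rmat k *m (Amat k *m x) = 0 ->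
  lam * sqnorm R (n k) x <= qform R (n k) (Amat k) x.
Proof.
move=> ker_pi WWt B_ge x; rewrite mulmxA Rmat_Amat -mulmxA => A_pi_x.
have Ac_unit : Amat k.-1 \in unitmx by apply/Amat_unit/level_range_pred.
have /ker_pi [y ->] : pi k *m x = 0.
  by rewrite -(mulKmx Ac_unit (pi k *m x)) A_pi_x mulmx0.
have := B_ge y; rewrite !sqnormE !qformE /Bmat !dot_trmxl.
by rewrite !mulmxA WWt mul1mx.
Qed.
End Level.
End GambletHierarchy.

Lemma Anorm_le_of_qform_le (R : realType) N (M : 'M[R]_N) (x y : 'cV[R]_N) (th : R) :
  0 <= th -> qform R N M x <= th ^+ 2 * qform R N M y ->
  Anorm R N M x <= th * Anorm R N M y.
Proof.
move=> th_ge0 qxy; rewrite /Anorm -(ger0_norm th_ge0) -sqrtr_sqr -sqrtrM ?sqr_ge0 //.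
exact: ler_wsqrtr.
Qed.

Lemma archi_mul_bound (R : realType) (K th : R) : 0 <= K -> 0 < th ->
  exists m : nat, K <= m%:R * th.
Proof.
move=> K_ge0 th_gt0; exists (Num.bound (K / th)).
by rewrite -ler_pdivrMr // ltW // archi_boundP // divr_ge0 // ltW.
Qed.

Lemma gamblet_scale_ratio (R : realType) (C H : R) k : C != 0 -> H != 0 ->
  C * H ^- (2 * k.+1) = C ^+ 2 / H ^+ 2 * (C^-1 * H ^- (2 * k)).
Proof. by move=> C_neq0 H_neq0; rewrite mulnS exprD; field; rewrite expf_neq0 ?C_neq0. Qed.

Theorem theorem2 (R : realType) (C H : R) (hC : 0 < C) (hH0 : 0 < H) (hH1 : H < 1)
  (theta : R) (ht0 : 0 < theta) (ht1 : theta < 1) :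
  exists mhalf : nat,
  forall (V V0 Vs : lmodType R) (iV : V -> V0) (i0 : V0 -> Vs)
    (ip0 : V0 -> V0 -> R) (dual : Vs -> V -> R) (L : V -> Vs) (Linv : Vs -> V)
    (q : nat) (n : nat -> nat) (phi : forall k, 'I_(n k) -> V0)
    (pi : forall k, 'M[R]_(n k.-1, n k))
    (W : forall k, 'M[R]_(n k - n k.-1, n k)),
  (* ---- Gelfand triple V ⊂ V0 ⊂ V* ---- *)
  (forall (a : R) (x y : V), iV (a *: x + y) = a *: iV x + iV y) ->
  injective iV ->
  (forall (a : R) (x y : V0), i0 (a *: x + y) = a *: i0 x + i0 y) ->
  injective i0 ->
  (forall (a : R) (x y z : V0), ip0 (a *: x + y) z = a * ip0 x z + ip0 y z) ->
  (forall x y : V0, ip0 x y = ip0 y x) ->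
  (forall x : V0, x != 0 -> 0 < ip0 x x) ->
  (forall (a : R) (f g : Vs) (v : V), dual (a *: f + g) v = a * dual f v + dual g v) ->
  (forall (a : R) (f : Vs) (v w : V), dual f (a *: v + w) = a * dual f v + dual f w) ->
  (forall f : Vs, (forall v : V, dual f v = 0) -> f = 0) ->
  (forall (x : V0) (v : V), dual (i0 x) v = ip0 x (iV v)) ->
  (* ---- L : V -> V* symmetric positive linear bijection ---- *)
  (forall (a : R) (u w : V), L (a *: u + w) = a *: L u + L w) ->
  cancel L Linv -> cancel Linv L ->
  (forall u w : V, dual (L u) w = dual (L w) u) ->
  (forall u : V, u != 0 -> 0 < dual (L u) u) ->
  (* ---- gamblets: independence, well-conditioned mass matrices ---- *)
  (forall k, (1 <= k <= q)%N -> forall x : 'cV[R]_(n k),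
      \sum_i x i 0 *: phi k i = 0 -> x = 0) ->
  (forall k, (1 <= k <= q)%N -> forall x : 'cV[R]_(n k),
      C^-1 * sqnorm R (n k) x <= norm0 R V0 ip0 (\sum_i x i 0 *: phi k i) ^+ 2 /\
      norm0 R V0 ip0 (\sum_i x i 0 *: phi k i) ^+ 2 <= C * sqnorm R (n k) x) ->
  (* ---- nesting, pi k = pi^(k-1,k) ---- *)
  (forall k, (2 <= k <= q)%N ->
      (forall i, phi k.-1 i = \sum_j pi k i j *: phi k j) /\
      \rank (pi k) = n k.-1 /\ pi k *m (pi k)^T = 1%:M) ->
  (* ---- W^(k), k >= 2 ---- *)
  (forall k, (2 <= k <= q)%N ->
      (forall x : 'cV[R]_(n k), pi k *m x = 0 <-> exists y, x = (W k)^T *m y) /\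
      W k *m (W k)^T = 1%:M) ->
  (* ---- estimate (i) ---- *)
  (forall k, (1 <= k <= q)%N -> forall u : V,
      norm0 R V0 ip0 (iV (u - uproj R V V0 Vs i0 dual Linv n phi k u))
      <= C * H ^+ k * enorm R V Vs dual L (u - uproj R V V0 Vs i0 dual Linv n phi k u)) ->
  (forall k, (1 <= k <= q)%N -> forall (u : V) (f : V0), L u = i0 f ->
      enorm R V Vs dual L (u - uproj R V V0 Vs i0 dual Linv n phi k u)
      <= C * H ^+ k * norm0 R V0 ip0 f) ->
  (* ---- estimate (ii) ---- *)
  (let A1 := Amat R V V0 Vs i0 dual Linv n phi 1 in
   loewner_ge R (n 1) A1 C^-1 /\ loewner_le R (n 1) A1 (C * H ^- 2) /\
   Cond R (n 1) A1 <= C * H ^- 2) ->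
  (forall k, (2 <= k <= q)%N ->
   let B := Bmat R V V0 Vs i0 dual Linv n phi W k in
   loewner_ge R _ B (C^-1 * H ^- (2 * k.-1)) /\ loewner_le R _ B (C * H ^- (2 * k)) /\
   Cond R _ B <= C * H ^- 2) ->
  (forall k, (1 <= k <= q)%N ->
   loewner_ge R (n k) (Amat R V V0 Vs i0 dual Linv n phi k) C^-1 /\
   loewner_le R (n k) (Amat R V V0 Vs i0 dual Linv n phi k) (C * H ^- (2 * k))) ->
  (* ---- conclusion: MG with p = 1, m1 = m2 = mhalf (m = 2 mhalf) ---- *)
  forall k, (1 <= k <= q)%N -> forall g z0 : 'cV[R]_(n k),
  let A := Amat R V V0 Vs i0 dual Linv n phi in
  let z := invmx (A k) *m g in
  Anorm R (n k) (A k)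
    (z - MG R n A (Rmat R V V0 Vs i0 dual Linv n phi pi)
             (fun j => C * H ^- (2 * j)) mhalf mhalf 1 k z0 g)
  <= theta * Anorm R (n k) (A k) (z - z0).
Proof.
have [m Km] := @archi_mul_bound R (C ^+ 2 / H ^+ 2) (theta ^+ 2)
  (divr_ge0 (sqr_ge0 _) (sqr_ge0 _)) (exprn_gt0 _ ht0).
exists m => V V0 Vs iV i0 ip0 dual L Linv q n phi pi W _ _ i0_lin _ _ _ _
  dual_lin1 dual_lin2 _ _ L_lin LK LinvK L_sym _ _ _ nest Wker _ _ _ B_bnd A_bnd
  k k_range g z0 /=.
apply: Anorm_le_of_qform_le (ltW ht0) _.
have dual_scalarl v : scalar (dual^~ v) by move=> a f f'; apply: dual_lin1.
have dual_scalarr f : scalar (dual f) by move=> a v w; apply: dual_lin2.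
have Cinv_gt0 : 0 < C^-1 by rewrite invr_gt0.
have A_unit j : (1 <= j <= q)%N -> Amat R V V0 Vs i0 dual Linv n phi j \in unitmx.
  by move=> j_range; apply: qform_coercive_unitmx Cinv_gt0 (A_bnd j j_range).1.
apply: (MG_contraction (lam := fun j => C^-1 * H ^- (2 * j.-1)) _ _ _ _ _ _ _ _ _ k_range).
- by move=> j _; apply: Amat_sym.
- exact: A_unit.
- move=> j j_range; exact: loewner_ge_qform_ge0 (ltW Cinv_gt0) (A_bnd j j_range).1.
- by move=> j j_range; apply: (A_bnd j j_range).2.
- by move=> j _; rewrite mulr_gt0 ?invr_gt0 ?exprn_gt0.
- move=> j j_range; exact: (Rmat_galerkin i0_lin dual_scalarl dual_scalarr L_lin LK
    LinvK L_sym A_unit j_range (nest j j_range).1).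
- by move=> j _; rewrite mulr_ge0 ?invr_ge0 ?exprn_ge0 ?ltW.
- move=> j j_range; have [ker_pi WWt] := Wker j j_range.
  exact: (Rmat_complement_ge A_unit j_range (fun x => (ker_pi x).1) WWt (B_bnd j j_range).1).
- move=> [|j] // _ /=; rewrite gamblet_scale_ratio ?lt0r_neq0 //.
  by rewrite ler_wpM2r // mulr_ge0 ?invr_ge0 ?exprn_ge0 ?ltW.
Qed.
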